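(* Let $K\subseteq\mathbb{R}^n$ be a proper cone, $b\in\mathbb{R}^n$, and let $A\in\mathbb{R}^{n\times n}$ be $K$-nonnegative and $K$-monotone. Let $A=U-V$ be a $K$-regular splitting and let $U=F-G$ be a $K$-weak regular splitting of type II such that $VF^{-1}G=GF^{-1}V$. Let $s\geq1$ be a fixed number of inner iterations, and set $$T_{s}=(F^{-1}G)^{s}+\sum_{j=0}^{s-1}(F^{-1}G)^{j}F^{-1}V,\qquad P_s^{-1}=\sum_{j=0}^{s-1}(F^{-1}G)^{j}F^{-1}.$$ Let sequences $\{x_k\},\{y_k\}$ be generated by $x_{k+1}=T_sx_k+P_s^{-1}b$ and $y_{k+1}=T_sy_k+P_s^{-1}b$, $k=0,1,2,\ldots$, from initial vectors $x_0,y_0$ satisfying $$x_1\geq_K x_0,\quad y_0\geq_K y_1,\quad y_0\geq_K A^{-1}b\geq_K x_0.$$ Then (i) $y_k\geq_K y_{k+1}\geq_K x_{k+1}\geq_K x_k$ for all $k=0,1,2,\ldots$; (ii) $\lim_{k\to\infty}x_k=A^{-1}b=\lim_{k\to\infty}y_k$ and $y_k\geq_K y_{k+1}\geq_K A^{-1}b\geq_K x_{k+1}\geq_K x_k$ for all $k=0,1,2,\ldots$.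
   Context: A proper cone $K\subseteq\mathbb{R}^n$ is a closed, convex, pointed, solid cone. For $M\in\mathbb{R}^{n\times n}$, $M\geq_K 0$ ($M$ is $K$-nonnegative) means $MK\subseteq K$; for vectors, $x\geq_K y$ means $x-y\in K$. A matrix $A$ is $K$-monotone if $A$ is nonsingular and $A^{-1}\geq_K 0$. A splitting $A=U-V$ (with $U$ nonsingular) is $K$-regular if $U^{-1}\geq_K 0$ and $V\geq_K 0$; it is a $K$-weak regular splitting of type II if $U^{-1}\geq_K 0$ and $VU^{-1}\geq_K 0$. *)

(* R : realType, R^n = 'cV[R]_n with its canonical
   (product / sup-norm) topology from MathComp-Analysis. *)
From HB Require Import structures.
From mathcomp Require Import all_boot all_order all_algebra.
From mathcomp Require Import all_classical all_reals all_analysis.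
Set Implicit Arguments. Unset Strict Implicit. Unset Printing Implicit Defensive.
Import Order.TTheory GRing.Theory Num.Theory.
Import numFieldNormedType.Exports.
Local Open Scope classical_set_scope.
Local Open Scope ring_scope.

Definition is_cone (R : realType) (n : nat) (K : set 'cV[R]_n) : Prop :=
  forall (a : R) (x : 'cV[R]_n), 0 <= a -> K x -> K (a *: x).

Definition is_convex_set (R : realType) (n : nat) (K : set 'cV[R]_n) : Prop :=
  forall (t : R) (x y : 'cV[R]_n), 0 <= t <= 1 -> K x -> K y ->
    K (t *: x + (1 - t) *: y).

Definition is_pointed (R : realType) (n : nat) (K : set 'cV[R]_n) : Prop :=
  forall x : 'cV[R]_n, K x -> K (- x) -> x = 0.

Definition is_solid (R : realType) (n : nat) (K : set 'cV[R]_n) : Prop :=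
  (interior K) !=set0.

Definition proper_cone (R : realType) (n : nat) (K : set 'cV[R]_n) : Prop :=
  [/\ is_cone K, closed K, is_convex_set K, is_pointed K & is_solid K].

Definition Kge (R : realType) (n : nat) (K : set 'cV[R]_n) (x y : 'cV[R]_n) : Prop :=
  K (x - y).

Definition Knonneg (R : realType) (n : nat) (K : set 'cV[R]_n) (M : 'M[R]_n) : Prop :=
  forall x, K x -> K (M *m x).

Definition Kmonotone (R : realType) (n : nat) (K : set 'cV[R]_n) (A : 'M[R]_n) : Prop :=
  A \in unitmx /\ Knonneg K (invmx A).

Definition K_regular_splitting (R : realType) (n : nat) (K : set 'cV[R]_n)
  (A U V : 'M[R]_n) : Prop :=
  [/\ A = U - V, U \in unitmx, Knonneg K (invmx U) & Knonneg K V].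

Definition K_weak_regular_splitting_II (R : realType) (n : nat) (K : set 'cV[R]_n)
  (A U V : 'M[R]_n) : Prop :=
  [/\ A = U - V, U \in unitmx, Knonneg K (invmx U) & Knonneg K (V *m invmx U)].

Definition Ts (R : realType) (n : nat) (F G V : 'M[R]_n) (s : nat) : 'M[R]_n :=
  (invmx F *m G) ^+ s + \sum_(j < s) ((invmx F *m G) ^+ j *m invmx F *m V).

Definition Psinv (R : realType) (n : nat) (F G : 'M[R]_n) (s : nat) : 'M[R]_n :=
  \sum_(j < s) ((invmx F *m G) ^+ j *m invmx F).

(* Both splittings make T_s K-nonnegative (F^-1 G = U^-1 (G F^-1) U with U = A + V >=_K 0),
   and T_s + P_s^-1 A = I, so A^-1 b is a fixed point of the iteration.  Hence every error and
   every increment is T_s^k applied to a vector of K: x_k - A^-1 b = T_s^k (x_0 - A^-1 b) and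
   x_(k+1) - x_k = T_s^k (x_1 - x_0), which gives the monotonicity and the two-sided bounds.
   For convergence, a closed pointed cone of R^n is normal, so the K-decreasing, K-nonnegative
   sequence T_s^k (A^-1 b - x_0) converges; its limit l lies in K and is fixed by T_s, so
   P_s^-1 A l = 0, i.e. sum_(j < s) (G F^-1)^j (A l) = 0.  All terms lie in K and the j = 0 term
   is A l, so pointedness gives A l = 0 and l = 0. *)

From HB Require Import structures.
From mathcomp Require Import all_boot all_order all_algebra.
From mathcomp Require Import all_classical all_reals all_analysis.
Import Order.TTheory GRing.Theory Num.Theory.
Import numFieldNormedType.Exports.
Local Open Scope classical_set_scope.
Local Open Scope ring_scope.

Section MatrixNorm.
Context {R : realType}.

Lemma mx_norm_entry {m p} (M : 'M[R]_(m, p)) i j : `|M i j| <= `|M|.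
Proof.
rewrite [leRHS]/Num.Def.normr /= mx_normrE.
exact: (le_bigmax _ (fun ij : 'I_m * 'I_p => `|M ij.1 ij.2|) (i, j)).
Qed.

Lemma mx_norm_le {m p} (M : 'M[R]_(m, p)) c :
  0 <= c -> (forall i j, `|M i j| <= c) -> `|M| <= c.
Proof.
move=> c0 Mc; rewrite [leLHS]/Num.Def.normr /= mx_normrE.
by apply/bigmax_leP; split => // ij _; exact: Mc.
Qed.

Lemma mx_norm_trmx {m p} (M : 'M[R]_(m, p)) : `|M^T| = `|M|.
Proof.
apply/le_anti/andP; split; apply: mx_norm_le => // i j.
  by rewrite mxE mx_norm_entry.
by have := mx_norm_entry M^T j i; rewrite mxE.
Qed.

Lemma mulmx_lipschitz {m p} (M : 'M[R]_(m, p)) :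
  exists2 c, 0 < c & forall v : 'cV[R]_p, `|M *m v| <= c * `|v|.
Proof.
have S0 : 0 <= \sum_i \sum_j `|M i j|.
  by apply: sumr_ge0 => i _; apply: sumr_ge0.
exists (\sum_i \sum_j `|M i j| + 1); first by rewrite ltr_wpDl.
move=> v; apply: mx_norm_le => [|i j]; first by rewrite mulr_ge0 ?addr_ge0.
rewrite mxE; apply: le_trans (ler_norm_sum _ _ _) _.
apply: (@le_trans _ _ (\sum_k `|M i k| * `|v|)).
  by apply: ler_sum => k _; rewrite normrM ler_wpM2l ?mx_norm_entry.
rewrite -mulr_suml ler_wpM2r // (bigD1 i) //= -addrA lerDl addr_ge0 //.
by rewrite sumr_ge0 // => k _; rewrite sumr_ge0.
Qed.

Lemma mulmx_continuous {m p} (M : 'M[R]_(m, p)) :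
  continuous (fun v : 'cV[R]_p => M *m v).
Proof.
have [c c0 Mc] := mulmx_lipschitz M.
move=> v; apply/(@cvgrPdist_lt _ _ _ (nbhs v)) => e e0; near=> w.
rewrite -mulmxBr (le_lt_trans (Mc _)) // -ltr_pdivlMl //.
by near: w; apply: cvgr_dist_lt => //; rewrite mulr_gt0 ?invr_gt0.
Unshelve. all: by end_near. Qed.

Lemma bounded_cV_cluster {n} (u : nat -> 'cV[R]_n) (M : R) :
  (forall k, `|u k| <= M) ->
  exists c, forall e, 0 < e -> forall N, exists2 m, (N <= m)%N & `|u m - c| < e.
Proof.
(* Heine-Borel ([bounded_closed_compact]) is available for row vectors, hence the transposes. *)
move=> uM; set B := [set r : 'rV[R]_n | `|r| <= M].
have cB : compact B.
  apply: bounded_closed_compact.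
    exists M; split; first by rewrite num_real.
    by move=> r Mr v /= Bv; apply: le_trans Bv (ltW Mr).
  have -> : B = closed_ball_ Num.Def.normr (0 : 'rV[R]_n) M.
    by apply/funext => v; rewrite /closed_ball_ /B /= sub0r normrN.
  exact: closed_closed_ball_.
have [c [_ clc]] : B `&` cluster ((fun k => (u k)^T) @ \oo) !=set0.
  by apply: cB; exists 0%N => // k _; rewrite /B /= mx_norm_trmx.
exists c^T => e e0 N.
have [|//|r [[m Nm ->]]] := clc [set r | exists2 m, (N <= m)%N & r = (u m)^T] (ball c e).
- by exists N => // m /= Hm; exists m.
- exact: nbhsx_ballx.
rewrite -ball_normE /ball_ /= => um; exists m => //.
by rewrite -mx_norm_trmx linearB /= trmxK distrC.
Qed.

End MatrixNorm.

Lemma closed_approx {R : numFieldType} {V : normedModType R} (A : set V) (p : V) :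
  closed A -> (forall e, 0 < e -> exists2 v, A v & `|v - p| < e) -> A p.
Proof.
move=> Acl Ap; apply: Acl => B /nbhs_ballP [e e0 eB].
have [v Av vp] := Ap e e0; exists v; split => //; apply: eB.
by rewrite -ball_normE /ball_ /= distrC.
Qed.

Section ClosedPointedCone.
Context {R : realType} {n : nat} {K : set 'cV[R]_n}.
Hypotheses (Kcone : is_cone K) (Kcl : closed K) (Kpt : is_pointed K).

Lemma cone_no_null_unit_sequence (a b : nat -> 'cV[R]_n) :
  (forall m, K (a m)) -> (forall m, Kge K (b m) (a m)) ->
  (forall m, `|a m| = 1) -> b @ \oo --> (0 : 'cV[R]_n) -> False.
Proof.
move=> Ka Kba a1 b0.
have [c ac] : exists c, forall e, 0 < e -> forall N,
    exists2 m, (N <= m)%N & `|a m - c| < e.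
  by apply: (@bounded_cV_cluster _ _ a 1) => m; rewrite a1.
have Kc : K c.
  apply: closed_approx => // e e0; have [m _ am] := ac e e0 0%N.
  by exists (a m).
have Knc : K (- c).
  apply: closed_approx => // e e0.
  have e20 : 0 < e / 2 by rewrite divr_gt0.
  have [N _ bN] := cvgr_dist_lt _ _ b0 _ e20.
  have [m Nm am] := ac (e / 2) e20 N.
  exists (b m - a m); first exact: Kba.
  rewrite opprK (_ : _ - _ + c = b m - (a m - c)); last first.
    by rewrite opprB addrA addrAC.
  apply: le_lt_trans (ler_normB _ _) _; rewrite (splitr e) ltrD //.
  by have := bN m Nm; rewrite sub0r normrN.
have [m _] := ac 1 ltr01 0%N.
by rewrite (Kpt _ Kc Knc) subr0 a1 ltxx.
Qed.

Lemma cone_normal :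
  exists2 C, 0 < C & forall a b, K a -> Kge K b a -> `|a| <= C * `|b|.
Proof.
apply: contrapT => noC.
have ab m : exists ab : 'cV[R]_n * 'cV[R]_n,
    [/\ K ab.1, Kge K ab.2 ab.1, `|ab.1| = 1 & `|ab.2| < m.+1%:R^-1].
  have /existsNP [a /existsNP [b]] :
      ~ forall a b, K a -> Kge K b a -> `|a| <= m.+1%:R * `|b|.
    by move=> normal; apply: noC; exists m.+1%:R.
  move=> /not_implyP [Ka /not_implyP [Kba]] /negP; rewrite -ltNge => lt.
  have a0 : 0 < `|a| by apply: le_lt_trans lt; rewrite mulr_ge0.
  have Kscale v : K v -> K (`|a|^-1 *: v) by apply: Kcone; rewrite invr_ge0 ltW.
  exists (`|a|^-1 *: a, `|a|^-1 *: b); split => /=.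
  - exact: Kscale.
  - by rewrite /Kge -scalerBr; exact: Kscale.
  - by rewrite normrZ normfV normr_id mulVf // gt_eqF.
  - by rewrite normrZ normfV normr_id ltr_pdivrMl // ltr_pdivlMr // mulrC.
have [f /all_and4 [Ka Kba a1 b_lt]] := choice ab.
apply: (@cone_no_null_unit_sequence (fun m => (f m).1) (fun m => (f m).2)) => //.
apply/cvgrPdist_lt => e e0; have [N _ Ne] := near_infty_natSinv_lt (PosNum e0).
by exists N => // m Nm; rewrite sub0r normrN (lt_trans (b_lt m)) ?Ne.
Qed.

Hypotheses (Kconv : is_convex_set K) (K0 : K 0).

Lemma cone_add x y : K x -> K y -> K (x + y).
Proof.
move=> Kx Ky; have half : (1 - 2^-1 : R) = 2^-1.
  by rewrite {1}(splitr 1) mul1r addrK.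
have -> : x + y = 2 *: (2^-1 *: x + (1 - 2^-1) *: y).
  by rewrite half -scalerDr scalerA mulfV ?scale1r // pnatr_eq0.
apply: Kcone => //; apply: Kconv => //.
by rewrite invr_ge0 ler0n /= invf_le1 ?ler1n.
Qed.

Lemma Kge_refl x : Kge K x x.
Proof. by rewrite /Kge subrr. Qed.

Lemma Kge_trans {y x z} : Kge K x y -> Kge K y z -> Kge K x z.
Proof. by rewrite /Kge => Kxy Kyz; rewrite -[x](subrK y) -addrA; apply: cone_add. Qed.

Lemma cone_decreasing_cvg (w : nat -> 'cV[R]_n) :
  (forall k, K (w k)) -> (forall k, Kge K (w k) (w k.+1)) ->
  exists2 l, K l & w @ \oo --> l.
Proof.
move=> Kw wdec.
have wge : {homo w : k m / (k <= m)%N >-> Kge K k m}.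
  by apply: homo_leq => [x|y x z|//]; [exact: Kge_refl | exact: Kge_trans].
have [C C0 normal] := cone_normal.
have [l wl] : exists l, forall e, 0 < e -> forall N,
    exists2 m, (N <= m)%N & `|w m - l| < e.
  apply: (@bounded_cV_cluster _ _ w (C * `|w 0%N|)) => k.
  by apply: normal => //; exact: wge.
have wgel k : Kge K (w k) l.
  rewrite /Kge; apply: closed_approx => // e e0; have [m km wml] := wl e e0 k.
  by exists (w k - w m); [exact: wge | rewrite opprB addrC addrA subrK distrC].
exists l.
  by apply: closed_approx => // e e0; have [m _ wml] := wl e e0 0%N; exists (w m).
apply/cvgrPdist_lt => e e0; have [m _ wml] := wl (e / C) (divr_gt0 e0 C0) 0%N.
exists m => // k /= mk; rewrite distrC.
apply: le_lt_trans (normal (w k - l) (w m - l) (wgel k) _) _.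
  by rewrite /Kge opprB addrA subrK; exact: wge.
by rewrite -ltr_pdivlMl // mulrC.
Qed.

End ClosedPointedCone.

Lemma affine_trajectory_sub {R : pzRingType} {n} {M : 'M[R]_n} {c : 'cV[R]_n}
    {z z' : nat -> 'cV[R]_n} :
  (forall k, z k.+1 = M *m z k + c) -> (forall k, z' k.+1 = M *m z' k + c) ->
  forall k, z k - z' k = M ^+ k *m (z 0%N - z' 0%N).
Proof.
move=> hz hz'; elim=> [|k IH]; first by rewrite expr0 mul1mx.
by rewrite hz hz' opprD addrACA subrr addr0 -mulmxBr IH mulmxA mulmxE -exprS.
Qed.

Section KNonnegMatrix.
Context {R : realType} {n : nat} {K : set 'cV[R]_n}.
Hypotheses (Kcone : is_cone K) (Kcl : closed K) (Kconv : is_convex_set K)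
  (Kpt : is_pointed K) (K0 : K 0).

Lemma Knonneg1 : Knonneg K 1%:M.
Proof. by move=> v; rewrite mul1mx. Qed.

Lemma Knonneg_mul (M N : 'M[R]_n) : Knonneg K M -> Knonneg K N -> Knonneg K (M *m N).
Proof. by move=> Mnon Nnon v Kv; rewrite -mulmxA; apply/Mnon/Nnon. Qed.

Lemma Knonneg_add (M N : 'M[R]_n) : Knonneg K M -> Knonneg K N -> Knonneg K (M + N).
Proof.
by move=> Mnon Nnon v Kv; rewrite mulmxDl; apply: cone_add => //; [apply: Mnon | apply: Nnon].
Qed.

Lemma Knonneg_exp (M : 'M[R]_n) k : Knonneg K M -> Knonneg K (M ^+ k).
Proof.
move=> Mnon; elim: k => [|k IH]; first by rewrite expr0; exact: Knonneg1.
by rewrite exprS -mulmxE; exact: Knonneg_mul.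
Qed.

Lemma Knonneg_sum m (f : 'I_m -> 'M[R]_n) :
  (forall j, Knonneg K (f j)) -> Knonneg K (\sum_j f j).
Proof.
move=> fnon; elim/big_ind: _ => //; last exact: Knonneg_add.
by move=> v _; rewrite mul0mx.
Qed.

Lemma Knonneg_Kge (M : 'M[R]_n) x y : Knonneg K M -> Kge K x y -> Kge K (M *m x) (M *m y).
Proof. by rewrite /Kge -mulmxBr; apply. Qed.

Lemma Knonneg_geom_sum_eq0 {W : 'M[R]_n} {z : 'cV[R]_n} {s} :
  Knonneg K W -> K z -> (0 < s)%N -> (\sum_(j < s) W ^+ j) *m z = 0 -> z = 0.
Proof.
move=> Wnon Kz; case: s => // s _.
rewrite big_ord_recl expr0 mulmxDl mul1mx => /eqP; rewrite addr_eq0 => /eqP zE.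
apply: (Kpt _ Kz); rewrite zE opprK.
by apply: Knonneg_sum => // j; exact: Knonneg_exp.
Qed.

Lemma Knonneg_expmx_cvg0 {M : 'M[R]_n} {d : 'cV[R]_n} :
  Knonneg K M -> (forall l, K l -> M *m l = l -> l = 0) ->
  K d -> Kge K d (M *m d) -> (fun k => M ^+ k *m d) @ \oo --> (0 : 'cV[R]_n).
Proof.
move=> Mnon Mfix Kd dMd.
have MSE k : M ^+ k.+1 *m d = M *m (M ^+ k *m d) by rewrite mulmxA mulmxE -exprS.
have [l Kl wl] : exists2 l, K l & (fun k => M ^+ k *m d) @ \oo --> l.
  apply: cone_decreasing_cvg => // [k|k]; first exact: Knonneg_exp.
  by rewrite exprSr -mulmxE -mulmxA; apply: Knonneg_Kge => //; exact: Knonneg_exp.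
suff Ml : M *m l = l by rewrite -(Mfix l Kl Ml).
have Mwl : (fun k => M *m (M ^+ k *m d)) @ \oo --> M *m l.
  exact: continuous_cvg (mulmx_continuous M l) wl.
have wSl : (fun k => M *m (M ^+ k *m d)) @ \oo --> l.
  by under eq_fun do rewrite -MSE; rewrite -cvg_shiftS in wl.
exact: cvg_unique Mwl wSl.
Qed.

Lemma Knonneg_trajectory_increasing_cvg {M : 'M[R]_n} {c p : 'cV[R]_n}
    {z : nat -> 'cV[R]_n} :
  Knonneg K M -> (forall l, K l -> M *m l = l -> l = 0) ->
  M *m p + c = p -> (forall k, z k.+1 = M *m z k + c) ->
  Kge K (z 1%N) (z 0%N) -> Kge K p (z 0%N) ->
  [/\ forall k, Kge K (z k.+1) (z k), forall k, Kge K p (z k) & z @ \oo --> p].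
Proof.
move=> Mnon Mfix Mp hz z10 pz0.
have errE := affine_trajectory_sub (fun=> esym Mp) hz.
have incE := affine_trajectory_sub (fun k => hz k.+1) hz.
split=> [k|k|]; first by rewrite /Kge incE; exact: Knonneg_exp.
  by rewrite /Kge errE; exact: Knonneg_exp.
have dMd : Kge K (p - z 0%N) (M *m (p - z 0%N)).
  by rewrite -[M]expr1 -errE /Kge opprB addrC addrA subrK.
have -> : z = (fun k => p - M ^+ k *m (p - z 0%N)).
  by apply/funext => k; rewrite -errE subKr.
rewrite -[in X in _ --> X](subr0 p).
exact: cvgB (cvg_cst p) (Knonneg_expmx_cvg0 Mnon Mfix pz0 dMd).
Qed.

Lemma Knonneg_trajectory_decreasing_cvg {M : 'M[R]_n} {c p : 'cV[R]_n}
    {z : nat -> 'cV[R]_n} :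
  Knonneg K M -> (forall l, K l -> M *m l = l -> l = 0) ->
  M *m p + c = p -> (forall k, z k.+1 = M *m z k + c) ->
  Kge K (z 0%N) (z 1%N) -> Kge K (z 0%N) p ->
  [/\ forall k, Kge K (z k) (z k.+1), forall k, Kge K (z k) p & z @ \oo --> p].
Proof.
move=> Mnon Mfix Mp hz z01 z0p.
have KgeN x y : Kge K (- x) (- y) = Kge K y x by rewrite /Kge opprK addrC.
have [|k|||inc le cvg] :=
  @Knonneg_trajectory_increasing_cvg M (- c) (- p) (fun k => - z k) Mnon Mfix.
- by rewrite mulmxN -opprD Mp.
- by rewrite hz opprD mulmxN.
- by rewrite KgeN.
- by rewrite KgeN.
by split=> [k|k|]; [rewrite -KgeN | rewrite -KgeN | apply/cvgNP].
Qed.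

End KNonnegMatrix.

Lemma expr_mul_rotate {R : pzRingType} (a b : R) j : (a * b) ^+ j * a = a * (b * a) ^+ j.
Proof.
elim: j => [|j IH]; first by rewrite !expr0 mul1r mulr1.
by rewrite exprSr -mulrA -mulrA mulrA IH -mulrA -exprSr.
Qed.

Lemma sum_expr_telescope {R : pzRingType} (x : R) s :
  \sum_(j < s) (x ^+ j - x ^+ j.+1) = 1 - x ^+ s.
Proof.
elim: s => [|s IH]; first by rewrite big_ord0 expr0 subrr.
by rewrite big_ord_recr /= IH addrA subrK.
Qed.

Section Splitting.
Context {R : realType} {n : nat} {A U V F G : 'M[R]_n} {s : nat}.
Hypotheses (AUV : A = U - V) (UFG : U = F - G) (Funit : F \in unitmx).

Local Notation T := (Ts F G V s).
Local Notation P := (Psinv F G s).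

Lemma Psinv_mulmx_U : P *m U = 1%:M - (invmx F *m G) ^+ s.
Proof.
have FiU : invmx F *m U = 1%:M - invmx F *m G by rewrite UFG mulmxBr mulVmx.
rewrite /Psinv mulmx_suml.
under eq_bigr => j _ do rewrite -mulmxA FiU mulmxBr mulmx1 mulmxE -exprSr.
exact: sum_expr_telescope.
Qed.

Lemma Ts_add_Psinv_mul : T + P *m A = 1%:M.
Proof.
rewrite AUV mulmxBr Psinv_mulmx_U /Ts /Psinv mulmx_suml.
by rewrite addrAC addrA subrK addrC subrK.
Qed.

Lemma Ts_fixpoint (b : 'cV[R]_n) : A \in unitmx ->
  T *m (invmx A *m b) + P *m b = invmx A *m b.
Proof.
move=> Aunit; have -> : P *m b = P *m A *m (invmx A *m b).
  by rewrite -mulmxA [A *m _]mulmxA mulmxV // mul1mx.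
by rewrite -mulmxDl Ts_add_Psinv_mul mul1mx.
Qed.

Lemma PsinvE : P = invmx F *m \sum_(j < s) (G *m invmx F) ^+ j.
Proof.
rewrite /Psinv mulmx_sumr; apply: eq_bigr => j _.
by rewrite !mulmxE expr_mul_rotate.
Qed.

Lemma invmx_mul_conj : U \in unitmx ->
  invmx F *m G = invmx U *m (G *m invmx F) *m U.
Proof.
move=> Uunit; have GE : G = F - U by rewrite UFG opprB addrC subrK.
rewrite GE mulmxBr mulVmx // mulmxBl mulmxV // mulmxBr mulmx1 mulmxA mulVmx //.
by rewrite mul1mx mulmxBl mulVmx.
Qed.

End Splitting.

Section ConeSplitting.
Context {R : realType} {n : nat} {K : set 'cV[R]_n} {A U V F G : 'M[R]_n} {s : nat}.
Hypotheses (Kcone : is_cone K) (Kconv : is_convex_set K) (Kpt : is_pointed K) (K0 : K 0).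
Hypotheses (Anon : Knonneg K A) (Aunit : A \in unitmx).
Hypotheses (AUV : A = U - V) (Uunit : U \in unitmx) (Uinon : Knonneg K (invmx U))
  (Vnon : Knonneg K V).
Hypotheses (UFG : U = F - G) (Funit : F \in unitmx) (Finon : Knonneg K (invmx F))
  (GFnon : Knonneg K (G *m invmx F)).

Lemma Ts_Knonneg : Knonneg K (Ts F G V s).
Proof.
have Unon : Knonneg K U.
  have -> : U = A + V by rewrite AUV subrK.
  by apply: Knonneg_add.
have Hnon : Knonneg K (invmx F *m G).
  by rewrite (invmx_mul_conj UFG Funit Uunit); do 2!apply: Knonneg_mul => //.
rewrite /Ts; apply: Knonneg_add => //; first by apply: Knonneg_exp.
by apply: Knonneg_sum => // j; do 2!apply: Knonneg_mul => //; apply: Knonneg_exp.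
Qed.

Lemma Ts_Kfixed_eq0 l : (0 < s)%N -> K l -> Ts F G V s *m l = l -> l = 0.
Proof.
move=> s_gt0 Kl Tl.
have PA : Psinv F G s *m A = 1%:M - Ts F G V s.
  by rewrite -(Ts_add_Psinv_mul (s := s) AUV UFG Funit) addrC addKr.
have : invmx F *m ((\sum_(j < s) (G *m invmx F) ^+ j) *m (A *m l)) = 0.
  by rewrite !mulmxA -PsinvE PA mulmxBl mul1mx Tl subrr.
move/(congr1 (mulmx F)); rewrite mulKVmx // mulmx0 => sumAl.
have Al0 := Knonneg_geom_sum_eq0 Kcone Kconv Kpt K0 GFnon (Anon _ Kl) s_gt0 sumAl.
by rewrite -(mulKmx Aunit l) Al0 mulmx0.
Qed.

End ConeSplitting.

Theorem theorem4p1 (R : realType) (n : nat) (K : set 'cV[R]_n) (b : 'cV[R]_n)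
  (A U V F G : 'M[R]_n) (s : nat) (x y : nat -> 'cV[R]_n) :
  proper_cone K ->
  Knonneg K A -> Kmonotone K A ->
  K_regular_splitting K A U V ->
  K_weak_regular_splitting_II K U F G ->
  V *m invmx F *m G = G *m invmx F *m V ->
  (1 <= s)%N ->
  (forall k, x k.+1 = Ts F G V s *m x k + Psinv F G s *m b) ->
  (forall k, y k.+1 = Ts F G V s *m y k + Psinv F G s *m b) ->
  Kge K (x 1%N) (x 0%N) -> Kge K (y 0%N) (y 1%N) ->
  Kge K (y 0%N) (invmx A *m b) -> Kge K (invmx A *m b) (x 0%N) ->
  (forall k, [/\ Kge K (y k) (y k.+1), Kge K (y k.+1) (x k.+1)
               & Kge K (x k.+1) (x k)]) /\
  (x @ \oo --> invmx A *m b /\ y @ \oo --> invmx A *m b /\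
   forall k, [/\ Kge K (y k) (y k.+1), Kge K (y k.+1) (invmx A *m b),
                 Kge K (invmx A *m b) (x k.+1) & Kge K (x k.+1) (x k)]).
Proof.
move=> [Kcone Kcl Kconv Kpt [e /interior_subset Ke]] Anon [Aunit _]
  [AUV Uunit Uinon Vnon] [UFG Funit Finon GFnon] _ s_gt0 hx hy x10 y01 y0_sol sol_x0.
have K0 : K 0 by rewrite -(scale0r e); exact: Kcone.
have Tnon : Knonneg K (Ts F G V s).
  exact: Ts_Knonneg Kcone Kconv K0 Anon AUV Uunit Uinon Vnon UFG Funit Finon GFnon.
have Tfix0 l : K l -> Ts F G V s *m l = l -> l = 0.
  exact: Ts_Kfixed_eq0 Kcone Kconv Kpt K0 Anon Aunit AUV UFG Funit GFnon l s_gt0.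
have sol := Ts_fixpoint (s := s) AUV UFG Funit b Aunit.
have [xinc xle xcvg] :=
  Knonneg_trajectory_increasing_cvg Kcone Kcl Kconv Kpt K0 Tnon Tfix0 sol hx x10 sol_x0.
have [ydec yge ycvg] :=
  Knonneg_trajectory_decreasing_cvg Kcone Kcl Kconv Kpt K0 Tnon Tfix0 sol hy y01 y0_sol.
have yx k : Kge K (y k) (x k) := Kge_trans Kcone Kconv (yge k) (xle k).
split=> [k|]; first by split.
by split=> //; split=> // k; split.
Qed.
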